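(* Let $U\subset\mathbb{H}^n$ be a domain. For any $v\in C^\infty(U)$, $$\Big||D_0^2v\,Xv|^2-\Delta_0v\,\Delta_{0,\infty}v-\frac12\big[|D_0^2v|^2-(\Delta_0v)^2\big]|Xv|^2\Big|\le(n-1)\Big[|D_0^2v|^2|Xv|^2-|D_0^2v\,Xv|^2\Big]\quad\text{in } U.$$
   Context: The Heisenberg group $\mathbb{H}^n$ is $\mathbb{R}^{2n}\times\mathbb{R}$ with the group law $(x,t)\cdot(x',t')=(x+x',\,t+t'-\frac12\sum_{i=1}^n[x_ix'_{i+n}-x_{i+n}x'_i])$, with left-invariant vector fields $X_i=\partial_{x_i}-\frac{x_{i+n}}{2}\partial_t$, $X_{i+n}=\partial_{x_{i+n}}+\frac{x_i}{2}\partial_t$ ($i=1,\dots,n$). For $v$, $Xv=(X_1v,\dots,X_{2n}v)$ (a column vector), $|Xv|$ its Euclidean norm, $\Delta_0v=\sum_{i=1}^{2n}X_iX_iv$, $D_0^2v=\big(\frac12[X_iX_jv+X_jX_iv]\big)_{i,j=1}^{2n}$ with Frobenius norm $|D_0^2v|$, $D_0^2v\,Xv$ the matrix-vector product, and $\Delta_{0,\infty}v=\sum_{i,j=1}^{2n}X_iv\,X_iX_jv\,X_jv=(Xv)^TD_0^2v\,Xv$. *)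

From HB Require Import structures.
From mathcomp Require Import all_boot all_order all_algebra.
From mathcomp Require Import all_classical all_reals all_analysis.
Set Implicit Arguments. Unset Strict Implicit. Unset Printing Implicit Defensive.
Import Order.TTheory GRing.Theory Num.Theory.
Import numFieldNormedType.Exports.
Local Open Scope classical_set_scope.
Local Open Scope ring_scope.

(* Points of the Heisenberg group H^n = R^{2n} x R: a pair (x, t),
   x : 'rV_(n+n) with coordinates x_1..x_{2n} (0-indexed: lshift n j is x_{j+1},
   rshift n j is x_{j+1+n}), t : R. *)
Definition Hn (R : realType) (n : nat) := ('rV[R]_(n + n) * R^o)%type.

(* The vector (in R^{2n} x R) representing the left-invariant vector field X_i at p:
   X_j     = d/dx_j     - x_{j+n}/2 d/dt   (i = lshift n j)
   X_{j+n} = d/dx_{j+n} + x_j/2     d/dt   (i = rshift n j). *)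
Definition Xdir (R : realType) (n : nat) (i : 'I_(n + n)) (p : Hn R n) : Hn R n :=
  (delta_mx 0 i,
   match fintype.split i with
   | inl j => - (p.1 0 (rshift n j)) / 2
   | inr j => (p.1 0 (lshift n j)) / 2
   end).

Definition Xf (R : realType) (n : nat) (i : 'I_(n + n)) (v : Hn R n -> R) : Hn R n -> R :=
  fun p => 'D_(Xdir i p) v p.

Definition Xgrad (R : realType) (n : nat) (v : Hn R n -> R) (p : Hn R n) : 'cV[R]_(n + n) :=
  \col_i Xf i v p.

Definition D02 (R : realType) (n : nat) (v : Hn R n -> R) (p : Hn R n) : 'M[R]_(n + n) :=
  \matrix_(i, j) ((Xf i (Xf j v) p + Xf j (Xf i v) p) / 2).

Definition Delta0 (R : realType) (n : nat) (v : Hn R n -> R) (p : Hn R n) : R :=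
  \sum_i Xf i (Xf i v) p.

Definition Delta0inf (R : realType) (n : nat) (v : Hn R n -> R) (p : Hn R n) : R :=
  \sum_i \sum_j Xf i v p * Xf i (Xf j v) p * Xf j v p.

Definition sqnormc (R : realType) (m : nat) (w : 'cV[R]_m) : R := \sum_i (w i 0) ^+ 2.
Definition sqfrob (R : realType) (m : nat) (A : 'M[R]_m) : R := \sum_i \sum_j (A i j) ^+ 2.

Fixpoint iter_deriv (R : realType) (V : normedModType R) (ds : seq V) (f : V -> R) : V -> R :=
  match ds with
  | [::] => f
  | d :: ds' => fun x => 'D_d (iter_deriv ds' f) x
  end.

Definition smooth_on (R : realType) (V : normedModType R) (U : set V) (f : V -> R) : Prop :=
  forall (ds : seq V) (x : V), U x -> differentiable (iter_deriv ds f) x.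

From HB Require Import structures.
From mathcomp Require Import all_boot all_order all_algebra.
From mathcomp Require Import all_classical all_reals all_analysis.
From mathcomp Require Import ring lra.
Import Order.TTheory GRing.Theory Num.Theory.
Import numFieldNormedType.Exports.
Local Open Scope classical_set_scope.
Local Open Scope ring_scope.
Set Implicit Arguments. Unset Strict Implicit. Unset Printing Implicit Defensive.

(* At a point put M := D_0^2 v (symmetric), w := Xv and s := |w|^2; the
   inequality only involves M and w, so it is pointwise linear algebra.  Compress M to the
   orthogonal complement of w with P := s I - w w^T, so that P^2 = s P and
   tr P = (2n - 1) s.  Then B := P M P has tr B = s (s tr M - w^T M w) and
   |B|^2 = s^2 (s^2 |M|^2 - 2 s |M w|^2 + (w^T M w)^2), and Cauchy-Schwarz
   between B and P gives (tr B)^2 <= (2n - 1) |B|^2.  After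
   multiplication by s, both sides of the claim are combinations of these
   two quantities and of s |M w|^2 - (w^T M w)^2 >= 0.  For n = 1 the
   left-hand side vanishes identically (Cayley-Hamilton in dimension 2). *)

Section TraceForm.
Variable R : realFieldType.

Lemma discr_le_of_quad_ge0 (a b c : R) : 0 <= b ->
  (forall t, 0 <= a - 2 * t * c + t ^+ 2 * b) -> c ^+ 2 <= a * b.
Proof.
move=> b_ge0 quad_ge0.
have [b0 | b_neq0] := eqVneq b 0.
  have [-> | c_neq0] := eqVneq c 0; first by rewrite b0 expr0n mulr0.
  have := quad_ge0 ((a + 1) / (2 * c)).
  have -> : a - 2 * ((a + 1) / (2 * c)) * c + ((a + 1) / (2 * c)) ^+ 2 * b = -1.
    by rewrite b0; field.
  by rewrite oppr_ge0 ler10.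
have b_gt0 : 0 < b by rewrite lt_def b_neq0.
have := quad_ge0 (c / b).
have -> : a - 2 * (c / b) * c + (c / b) ^+ 2 * b = (a * b - c ^+ 2) / b by field.
by rewrite pmulr_lge0 ?invr_gt0 // subr_ge0.
Qed.

Lemma mxtrace_mul_trmxE m k (C : 'M[R]_(m, k)) :
  \tr (C *m C^T) = \sum_i \sum_j C i j ^+ 2.
Proof.
apply: eq_bigr => i _; rewrite mxE; apply: eq_bigr => j _.
by rewrite mxE expr2.
Qed.

Lemma mxtrace_mul_trmx_ge0 m k (C : 'M[R]_(m, k)) : 0 <= \tr (C *m C^T).
Proof.
by rewrite mxtrace_mul_trmxE sumr_ge0 // => i _; rewrite sumr_ge0 // => j _; rewrite sqr_ge0.
Qed.

Lemma mxtrace_mul_trmx_eq0 m k (C : 'M[R]_(m, k)) : \tr (C *m C^T) = 0 -> C = 0.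
Proof.
rewrite mxtrace_mul_trmxE => /eqP.
rewrite psumr_eq0 => [/allP rows0|i _]; last by rewrite sumr_ge0 // => j _; rewrite sqr_ge0.
apply/matrixP => i j; rewrite mxE.
move: (rows0 i (mem_index_enum _)); rewrite implyTb psumr_eq0 => [/allP row0|l _].
  by move: (row0 j (mem_index_enum _)); rewrite implyTb sqrf_eq0 => /eqP.
by rewrite sqr_ge0.
Qed.

Lemma mxtrace_CauchySchwarz m k (A B : 'M[R]_(m, k)) :
  \tr (A *m B^T) ^+ 2 <= \tr (A *m A^T) * \tr (B *m B^T).
Proof.
apply: discr_le_of_quad_ge0 => [|t]; first exact: mxtrace_mul_trmx_ge0.
have := mxtrace_mul_trmx_ge0 (A - t *: B).
rewrite [(A - _)^T]linearB /= [(t *: B)^T]linearZ /= mulmxBl !mulmxBr -!scalemxAl -!scalemxAr.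
rewrite !linearB /= !mxtraceZ -[\tr (B *m A^T)]mxtrace_tr trmx_mul trmxK.
by congr (0 <= _); ring.
Qed.

Lemma mx11_mxtrace (A : 'M[R]_1) : A = (\tr A)%:M.
Proof. by rewrite /mxtrace big_ord1 {1}(mx11_scalar A). Qed.

Lemma quad_formE m (A : 'M[R]_m) (w : 'cV[R]_m) :
  \tr (w^T *m A *m w) = \sum_i \sum_j w i 0 * A i j * w j 0.
Proof.
rewrite /mxtrace big_ord1 mxE exchange_big; apply: eq_bigr => j _.
rewrite mxE mulr_suml; apply: eq_bigr => i _.
by rewrite !mxE.
Qed.

Lemma mxtrace_symmetrize m (A : 'M[R]_m) : \tr (2^-1 *: (A + A^T)) = \tr A.
Proof. by rewrite mxtraceZ mxtraceD mxtrace_tr; field. Qed.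

Lemma symmetrize_sym m (A : 'M[R]_m) : (2^-1 *: (A + A^T))^T = 2^-1 *: (A + A^T).
Proof. by rewrite linearZ /= linearD /= trmxK addrC. Qed.

Lemma quad_form_symmetrize m (A : 'M[R]_m) (w : 'cV[R]_m) :
  \tr (w^T *m (2^-1 *: (A + A^T)) *m w) = \tr (w^T *m A *m w).
Proof.
have quad_tr : w^T *m A^T *m w = (w^T *m A *m w)^T by rewrite !trmx_mul trmxK mulmxA.
rewrite -scalemxAr -scalemxAl mxtraceZ mulmxDr mulmxDl mxtraceD quad_tr mxtrace_tr.
by field.
Qed.

End TraceForm.

Section Compression.
Variables (R : realFieldType) (N : nat) (M : 'M[R]_N) (w : 'cV[R]_N).
Hypothesis symM : M^T = M.

Let s := \tr (w^T *m w).
Let q := \tr (w^T *m M *m w).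
Let r := \tr ((M *m w)^T *m (M *m w)).
Let F := \tr (M *m M^T).
Let T := \tr M.
Let P := s%:M - w *m w^T.

Lemma quad_form_sq_le : q ^+ 2 <= r * s.
Proof.
have := mxtrace_CauchySchwarz w^T (M *m w)^T.
by rewrite !trmxK mulrC mulmxA.
Qed.

Lemma compression_sym : P^T = P.
Proof. by rewrite linearB /= tr_scalar_mx trmx_mul trmxK. Qed.

Lemma compression_sq : P *m P = s *: P.
Proof.
have wwT_sq : w *m w^T *m (w *m w^T) = s *: (w *m w^T).
  by rewrite mulmxA -[w *m w^T *m w]mulmxA [w^T *m w]mx11_mxtrace mul_mx_scalar scalemxAl.
rewrite mulmxBl !mulmxBr mul_scalar_mx mul_mx_scalar wwT_sq mul_scalar_mx.
by rewrite subrr subr0 scalerBr.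
Qed.

Lemma mxtrace_compression_sandwich (Y : 'M[R]_N) : \tr (P *m Y *m P) = s * \tr (Y *m P).
Proof. by rewrite mxtrace_mulC mulmxA compression_sq -scalemxAl mxtraceZ mxtrace_mulC. Qed.

Lemma mxtrace_mul_compression : \tr (M *m P) = s * T - q.
Proof.
by rewrite mulmxBr mul_mx_scalar linearB /= mxtraceZ mulmxA mxtrace_mulC mulmxA.
Qed.

Lemma compressed_dot_compression : \tr (P *m M *m P *m P^T) = s ^+ 2 * (s * T - q).
Proof.
rewrite compression_sym -mulmxA compression_sq -scalemxAr mxtraceZ.
by rewrite mxtrace_compression_sandwich mxtrace_mul_compression; ring.
Qed.

Lemma compression_norm : \tr (P *m P^T) = s ^+ 2 * (N%:R - 1).
Proof.
rewrite compression_sym compression_sq mxtraceZ linearB /= mxtrace_scalar mxtrace_mulC.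
by rewrite -/s -mulr_natr; ring.
Qed.

Lemma compressed_norm :
  \tr (P *m M *m P *m (P *m M *m P)^T) = s ^+ 2 * (s ^+ 2 * F - 2 * s * r + q ^+ 2).
Proof.
have MM : \tr (M *m M) = F by rewrite /F symM.
have MwwM : \tr (M *m (w *m w^T) *m M) = r.
  by rewrite mxtrace_mulC /r trmx_mul symM !mulmxA mxtrace_mulC !mulmxA.
have MwwMww : \tr (M *m (w *m w^T) *m (M *m (w *m w^T))) = q ^+ 2.
  have -> : M *m (w *m w^T) *m (M *m (w *m w^T)) = M *m w *m (w^T *m M *m w) *m w^T.
    by rewrite !mulmxA.
  rewrite [w^T *m M *m w]mx11_mxtrace mul_mx_scalar -scalemxAl mxtraceZ.
  by rewrite [\tr (M *m w *m w^T)]mxtrace_mulC mulmxA expr2.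
rewrite !trmx_mul symM compression_sym.
have -> : P *m M *m P *m (P *m (M *m P)) = P *m (M *m (P *m P) *m M) *m P.
  by rewrite !mulmxA.
rewrite mxtrace_compression_sandwich compression_sq -scalemxAr -!scalemxAl mxtraceZ -mulmxA.
rewrite mulmxBr mul_mx_scalar mulmxBl !mulmxBr -!scalemxAl -!scalemxAr !linearB /= !mxtraceZ.
rewrite [\tr (M *m (M *m _))]mxtrace_mulC MM MwwM MwwMww.
by ring.
Qed.

Lemma compressed_norm_ge0 : 0 < s -> 0 <= s ^+ 2 * F - 2 * s * r + q ^+ 2.
Proof.
move=> s_gt0; have := mxtrace_mul_trmx_ge0 (P *m M *m P).
by rewrite compressed_norm pmulr_rge0 // exprn_gt0.
Qed.

Lemma compressed_trace_sq_le : 0 < s ->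
  (s * T - q) ^+ 2 <= (N%:R - 1) * (s ^+ 2 * F - 2 * s * r + q ^+ 2).
Proof.
move=> s_gt0; have s4_gt0 : 0 < s ^+ 2 * s ^+ 2 by rewrite mulr_gt0 ?exprn_gt0.
have := mxtrace_CauchySchwarz (P *m M *m P) P.
rewrite compressed_dot_compression compressed_norm compression_norm.
have -> : (s ^+ 2 * (s * T - q)) ^+ 2 = s ^+ 2 * s ^+ 2 * (s * T - q) ^+ 2 by ring.
have -> : s ^+ 2 * (s ^+ 2 * F - 2 * s * r + q ^+ 2) * (s ^+ 2 * (N%:R - 1))
   = s ^+ 2 * s ^+ 2 * ((N%:R - 1) * (s ^+ 2 * F - 2 * s * r + q ^+ 2)) by ring.
by rewrite ler_pM2l.
Qed.

End Compression.

Lemma big_ord2 (R : realFieldType) (f : 'I_2 -> R) : \sum_(i < 2) f i = f ord0 + f ord_max.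
Proof. by rewrite big_ord_recr big_ord1; congr (f _ + _); apply: val_inj. Qed.

Lemma sym_mx2_quad_identity (R : realFieldType) (M : 'M[R]_2) (w : 'cV[R]_2) : M^T = M ->
  \tr ((M *m w)^T *m (M *m w)) - \tr M * \tr (w^T *m M *m w)
   - (\tr (M *m M^T) - \tr M ^+ 2) / 2 * \tr (w^T *m w) = 0.
Proof.
move=> /matrixP/(_ ord0 ord_max); rewrite mxE => symM.
rewrite /mxtrace !(big_ord2, big_ord1, mxE) -symM.
by field.
Qed.

Lemma ineq_of_compression_bounds (R : realFieldType) (k s q r F T : R) :
  2 <= k -> 0 < s -> q ^+ 2 <= r * s ->
  0 <= s ^+ 2 * F - 2 * s * r + q ^+ 2 ->
  (s * T - q) ^+ 2 <= (k + k - 1) * (s ^+ 2 * F - 2 * s * r + q ^+ 2) ->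
  `| r - T * q - (F - T ^+ 2) / 2 * s | <= (k - 1) * (F * s - r).
Proof.
move=> k_ge2 s_gt0 Z_ge0 X_ge0 Y_le.
have two_s_gt0 : 0 < 2 * s by rewrite mulr_gt0.
rewrite -(ler_pM2l two_s_gt0) -{1}(gtr0_norm two_s_gt0) -normrM.
have -> : 2 * s * (r - T * q - (F - T ^+ 2) / 2 * s)
        = (s * T - q) ^+ 2 - (s ^+ 2 * F - 2 * s * r + q ^+ 2) by field.
have -> : 2 * s * ((k - 1) * (F * s - r))
        = 2 * (k - 1) * ((s ^+ 2 * F - 2 * s * r + q ^+ 2) + (r * s - q ^+ 2)) by ring.
set X := s ^+ 2 * F - 2 * s * r + q ^+ 2 in X_ge0 Y_le *.
have := sqr_ge0 (s * T - q); set Y := (s * T - q) ^+ 2 in Y_le * => Y_ge0.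
have kX_ge0 : 0 <= (k - 2) * X by rewrite mulr_ge0 // subr_ge0.
have kZ_ge0 : 0 <= (k - 1) * (r * s - q ^+ 2).
  by rewrite mulr_ge0 // subr_ge0 // (le_trans _ k_ge2) // ler1n.
rewrite ler_norml; apply/andP; split; lra.
Qed.

Lemma sym_mx_quad_ineq (R : realFieldType) (n : nat)
  (M : 'M[R]_(n + n)) (w : 'cV[R]_(n + n)) : M^T = M ->
  `| \tr ((M *m w)^T *m (M *m w)) - \tr M * \tr (w^T *m M *m w)
     - (\tr (M *m M^T) - \tr M ^+ 2) / 2 * \tr (w^T *m w) |
  <= (n%:R - 1) * (\tr (M *m M^T) * \tr (w^T *m w) - \tr ((M *m w)^T *m (M *m w))).
Proof.
move=> symM.
have [w0 | s_gt0] : w = 0 \/ 0 < \tr (w^T *m w).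
  have := mxtrace_mul_trmx_ge0 w^T; rewrite trmxK le_eqVlt => /orP[/eqP s0 | ]; last by right.
  by left; apply: trmx_inj; rewrite trmx0; apply: mxtrace_mul_trmx_eq0; rewrite trmxK -s0.
  by rewrite w0 !(mulmx0, mul0mx, trmx0, mxtrace0, mulr0, subr0, normr0).
case: n M w symM s_gt0 => [|[|m]] M w symM s_gt0.
- by move: s_gt0; rewrite [w]flatmx0 trmx0 mul0mx mxtrace0 ltxx.
- by rewrite (sym_mx2_quad_identity w symM) normr0 subrr mul0r.
apply: ineq_of_compression_bounds => //; first by rewrite ler_nat.
- exact: quad_form_sq_le.
- exact: compressed_norm_ge0.
- by rewrite -natrD; exact: compressed_trace_sq_le.
Qed.

Lemma sqnormc_mxtrace (R : realType) m (u : 'cV[R]_m) : sqnormc u = \tr (u^T *m u).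
Proof.
rewrite -{3}[u]trmxK mxtrace_mul_trmxE big_ord1.
by apply: eq_bigr => i _; rewrite mxE.
Qed.

Lemma sqfrob_mxtrace (R : realType) m (A : 'M[R]_m) : sqfrob A = \tr (A *m A^T).
Proof. by rewrite mxtrace_mul_trmxE. Qed.

Section HorizontalHessian.
Variables (R : realType) (n : nat) (v : Hn R n -> R) (p : Hn R n).

Let H := \matrix_(i, j) Xf i (Xf j v) p.

Lemma D02E : D02 v p = 2^-1 *: (H + H^T).
Proof. by apply/matrixP => i j; rewrite !mxE mulrC. Qed.

Lemma D02_sym : (D02 v p)^T = D02 v p.
Proof. by rewrite D02E symmetrize_sym. Qed.

Lemma Delta0_mxtrace : Delta0 v p = \tr (D02 v p).
Proof. by rewrite D02E mxtrace_symmetrize; apply: eq_bigr => i _; rewrite mxE. Qed.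

Lemma Delta0inf_quad_form :
  Delta0inf v p = \tr ((Xgrad v p)^T *m D02 v p *m Xgrad v p).
Proof.
rewrite D02E quad_form_symmetrize quad_formE.
by apply: eq_bigr => i _; apply: eq_bigr => j _; rewrite !mxE.
Qed.

End HorizontalHessian.

Theorem lemma3p3 (R : realType) (n : nat) (hn : (0 < n)%N)
  (U : set (Hn R n)) (hUo : open U) (hUc : connected U) (hU0 : U !=set0)
  (v : Hn R n -> R) (hv : smooth_on U v) :
  forall p : Hn R n, U p ->
    `| sqnormc (D02 v p *m Xgrad v p) - Delta0 v p * Delta0inf v p
       - (sqfrob (D02 v p) - (Delta0 v p) ^+ 2) / 2 * sqnormc (Xgrad v p) |
    <= (n%:R - 1) * (sqfrob (D02 v p) * sqnormc (Xgrad v p)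
                     - sqnormc (D02 v p *m Xgrad v p)).
Proof.
move=> p _.
rewrite !sqnormc_mxtrace sqfrob_mxtrace Delta0_mxtrace Delta0inf_quad_form.
exact: sym_mx_quad_ineq (D02_sym v p).
Qed.
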